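(* Let $\epsilon\in(0,1)$, let $m\le k\le n$ be positive integers with $k\ge\frac{m-1}{2\epsilon}$, and let $\mathbf a_1,\dots,\mathbf a_n\in\mathbb R^m$. Let $w^*=\max\{[\det(\sum_{i\in S}\mathbf a_i\mathbf a_i^\top)]^{1/m}: S\subseteq[n],|S|=k\}$, let $(\hat{\mathbf x},\hat w)$ be an optimal solution of the convex relaxation $$\max_{\mathbf x,w}\Big\{w:\ w\le \Big[\det\Big(\sum_{i\in[n]}x_i\mathbf a_i\mathbf a_i^\top\Big)\Big]^{1/m},\ \sum_{i\in[n]}x_i=k,\ \mathbf x\in[0,1]^n\Big\},$$ and let $\mathcal S$ be the random size-$k$ subset of $[n]$ with $\Pr[\mathcal S=S]=\prod_{j\in S}\hat x_j\big/\sum_{\bar S\subseteq[n],|\bar S|=k}\prod_{i\in\bar S}\hat x_i$ for every $S\subseteq[n]$ with $|S|=k$. Then $$\Big\{\mathbb E\Big[\det\Big(\sum_{i\in\mathcal S}\mathbf a_i\mathbf a_i^\top\Big)\Big]\Big\}^{1/m}\ge (0.5-\epsilon)\,w^*.$$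
   Context: $[n]=\{1,\dots,n\}$. *)

From HB Require Import structures.
From mathcomp Require Import all_boot all_order all_algebra.
From mathcomp Require Import reals exp.
Set Implicit Arguments. Unset Strict Implicit. Unset Printing Implicit Defensive.
Import Order.TTheory GRing.Theory Num.Theory.
Local Open Scope ring_scope.

Section Defs.
Variables (R : realType) (m n : nat).

Definition Mx (a : 'I_n -> 'cV[R]_m) (x : 'I_n -> R) : 'M[R]_m :=
  \sum_(i < n) x i *: (a i *m (a i)^T).

Definition MS (a : 'I_n -> 'cV[R]_m) (S : {set 'I_n}) : 'M[R]_m :=
  \sum_(i in S) (a i *m (a i)^T).

Definition mroot (t : R) : R := powR t (m%:R^-1).

(* w^* = max over |S| = k of det(sum_{i in S} a_i a_i^T)^{1/m}
   (all values are >= 0, so a max with neutral 0 is the true max) *)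
Definition wstar (a : 'I_n -> 'cV[R]_m) (k : nat) : R :=
  \big[Num.max/0]_(S : {set 'I_n} | #|S| == k) mroot (\det (MS a S)).

Definition feasible (a : 'I_n -> 'cV[R]_m) (k : nat) (x : 'I_n -> R) (w : R) : Prop :=
  w <= mroot (\det (Mx a x)) /\ \sum_(i < n) x i = k%:R /\
  (forall i, 0 <= x i <= 1).

Definition optimal (a : 'I_n -> 'cV[R]_m) (k : nat) (x : 'I_n -> R) (w : R) : Prop :=
  feasible a k x w /\ (forall x' w', feasible a k x' w' -> w' <= w).

Definition prob (k : nat) (x : 'I_n -> R) (S : {set 'I_n}) : R :=
  (\prod_(j in S) x j) /
  (\sum_(T : {set 'I_n} | #|T| == k) \prod_(i in T) x i).

Definition Edet (a : 'I_n -> 'cV[R]_m) (k : nat) (x : 'I_n -> R) : R :=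
  \sum_(S : {set 'I_n} | #|S| == k) prob k x S * \det (MS a S).

End Defs.

From HB Require Import structures.
From mathcomp Require Import all_boot all_order all_algebra.
From mathcomp Require Import reals exp.
From mathcomp Require Import ring lra zify.
Set Implicit Arguments. Unset Strict Implicit. Unset Printing Implicit Defensive.
Import Order.TTheory GRing.Theory Num.Theory.
Local Open Scope ring_scope.

(* By the Cauchy-Binet formula, det (sum_i x_i a_i a_i^T) = sum_{|T| = m} x^T det A_T with
   every det A_T >= 0, where x^T = prod_{i in T} x_i and A_T = sum_{i in T} a_i a_i^T.  Taking
   the expectation over S multiplies each x^T by e_{k-m}(x restricted to ~T) / e_k(x), where
   the e_l are the elementary symmetric sums.  For x in [0,1]^n the Newton-type inequalities
   (l+1) e_{l+1} <= s e_l and (s - l) e_l <= (l+1) e_{l+1} (s the total mass) show that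
   e_{l+1}(Y + t) <= (1 + q) e_l(Y) whenever Y has mass at most q (l+1); removing the m
   elements of T one at a time gives e_k <= (1+q)^m e_{k-m}(x on ~T).  With q = 1/(1 - 2 eps),
   admissible exactly when k >= (m-1)/(2 eps), this gives
   E[det A_S] >= (1/2 - eps)^m det (sum_i xhat_i a_i a_i^T), and the relaxation value
   dominates w^* because the indicator vectors of k-sets are feasible. *)

Lemma finset_ind (T : finType) (P : {set T} -> Prop) :
  P set0 -> (forall (t : T) (Y : {set T}), t \notin Y -> P Y -> P (t |: Y)) -> forall Y, P Y.
Proof.
move=> P0 PU1 Y; have [N] := ubnP #|Y|; elim: N Y => // N IH Y.
have [-> //|[t tY]] := set_0Vmem Y.
rewrite -(setD1K tY) cardsU1 setD11 ltnS => cY.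
by apply: PU1; [rewrite setD11 | exact: IH].
Qed.

Section ElementarySymmetric.
Variables (R : realFieldType) (n : nat) (x : 'I_n -> R).
Implicit Types (t : 'I_n) (S T Y : {set 'I_n}).

Definition monom (S : {set 'I_n}) : R := \prod_(i in S) x i.

Definition elem_sym (Y : {set 'I_n}) (l : nat) : R :=
  \sum_(S : {set 'I_n} | (S \subset Y) && (#|S| == l)) monom S.

Definition mass (Y : {set 'I_n}) : R := \sum_(i in Y) x i.

Lemma elem_sym0 Y : elem_sym Y 0 = 1.
Proof.
rewrite /elem_sym (big_pred1 set0) ?/monom ?big_set0 // => S.
by rewrite cards_eq0 andb_idl // => /eqP ->; rewrite sub0set.
Qed.

Lemma elem_sym_set0 l : elem_sym set0 l.+1 = 0.
Proof.
by rewrite /elem_sym big_pred0 // => S; rewrite subset0; case: eqP => // ->; rewrite cards0.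
Qed.

Lemma massU1 t Y : t \notin Y -> mass (t |: Y) = x t + mass Y.
Proof. exact: big_setU1. Qed.

Lemma elem_symU1 t Y l : t \notin Y ->
  elem_sym (t |: Y) l.+1 = elem_sym Y l.+1 + x t * elem_sym Y l.
Proof.
move=> tY; rewrite /elem_sym (bigID (fun S => t \in S)) /= addrC; congr (_ + _).
  by apply: eq_bigl => S; rewrite -[in RHS](setU1K tY) subsetD1 andbAC.
rewrite mulr_sumr (reindex_onto (fun S => t |: S) (fun S => S :\ t)) /=; last first.
  by move=> S /andP[_ tS]; rewrite setD1K.
apply: eq_big => [S|S /andP[_ /eqP <-]]; last first.
  by rewrite /monom big_setU1 ?setD11.
rewrite setU11 andbT.
have [tS|tS] := boolP (t \in S).
  have -> : ((t |: S) :\ t == S) = false.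
    by apply/negbTE/eqP => /setP/(_ t); rewrite setD11 tS.
  have -> : (S \subset Y) = false.
    by apply/negbTE/negP => /subsetP/(_ t tS); apply/negP.
  by rewrite andbF.
rewrite setU1K // eqxx andbT cardsU1 tS add1n eqSS subUset sub1set setU11 /=.
by rewrite -[in RHS](setU1K tY) subsetD1 tS andbT.
Qed.

Lemma sum_monom_supset k T : (#|T| <= k)%N ->
  \sum_(S : {set 'I_n} | (#|S| == k) && (T \subset S)) monom S =
  monom T * elem_sym (~: T) (k - #|T|).
Proof.
move=> Tk; rewrite /elem_sym mulr_sumr.
rewrite (reindex_onto (fun S => T :|: S) (fun S => S :\: T)) /=; last first.
  by move=> S /andP[_ TS]; rewrite -[RHS](setID S T) (setIidPr TS).
apply: eq_big => [S|S /andP[_ /eqP TSK]]; last first.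
  have dTS : [disjoint T & S] by rewrite -TSK disjoint_sym disjoints_subset subsetDr.
  by rewrite /monom -bigU //; apply: eq_bigl => i; rewrite !inE.
rewrite subsetUl andbT setDUl setDv set0U -disjoints_subset disjoint_sym.
have [dTS|ndTS] := boolP [disjoint T & S]; last first.
  have -> : (S :\: T == S) = false.
    by apply: contraNF ndTS => /eqP/setDidPl; rewrite disjoint_sym.
  by rewrite andbF.
have -> : S :\: T = S by apply/setDidPl; rewrite disjoint_sym.
rewrite eqxx andbT cardsU (disjoint_setI0 dTS) cards0 subn0.
by rewrite andTb; apply/eqP/eqP => [<-|->]; rewrite ?addKn ?subnKC.
Qed.

Hypothesis x_ge0 : forall i, 0 <= x i.

Lemma monom_ge0 S : 0 <= monom S.
Proof. exact: prodr_ge0. Qed.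

Lemma elem_sym_ge0 Y l : 0 <= elem_sym Y l.
Proof. by apply: sumr_ge0 => S _; apply: monom_ge0. Qed.

Lemma mass_ge0 Y : 0 <= mass Y.
Proof. exact: sumr_ge0. Qed.

Lemma mass_le_setT Y : mass Y <= mass setT.
Proof.
rewrite /mass big_mkcond [leRHS](eq_bigl xpredT) => [|i]; last by rewrite inE.
by apply: ler_sum => i _; case: ifP.
Qed.

Lemma elem_sym_succ_le Y l : l.+1%:R * elem_sym Y l.+1 <= mass Y * elem_sym Y l.
Proof.
elim/finset_ind: Y l => [|t Y tY IH] l.
  by rewrite elem_sym_set0 /mass big_set0 !mul0r mulr0.
rewrite massU1 // !elem_symU1 //; case: l => [|l].
  by have := IH 0%N; rewrite !elem_sym0; lra.
rewrite elem_symU1 //.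
have := mulr_ge0 (mulr_ge0 (x_ge0 t) (x_ge0 t)) (elem_sym_ge0 Y l).
have := ler_wpM2l (x_ge0 t) (IH l); have := IH l.+1.
rewrite -!natr1; nra.
Qed.

Hypothesis x_le1 : forall i, x i <= 1.

Lemma elem_sym_succ_ge Y l : (mass Y - l%:R) * elem_sym Y l <= l.+1%:R * elem_sym Y l.+1.
Proof.
elim/finset_ind: Y l => [|t Y tY IH] l.
  by rewrite elem_sym_set0 mulr0 /mass big_set0 sub0r mulNr oppr_le0 mulr_ge0 ?elem_sym_ge0.
rewrite massU1 // !elem_symU1 //; case: l => [|l].
  by have := IH 0%N; have := x_le1 t; rewrite !elem_sym0; lra.
rewrite elem_symU1 //.
have : 0 <= x t * (1 - x t) * elem_sym Y l.
  by rewrite !mulr_ge0 ?subr_ge0 ?x_ge0 ?x_le1 ?elem_sym_ge0.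
have := ler_wpM2l (x_ge0 t) (IH l); have := IH l.+1.
rewrite -!natr1; nra.
Qed.

Lemma elem_sym_gt0 Y l : l%:R <= mass Y -> 0 < elem_sym Y l.
Proof.
elim: l => [|l IH] hl; first by rewrite elem_sym0.
have hl' : l%:R <= mass Y by apply: le_trans hl; rewrite ler_nat.
have : 0 < (mass Y - l%:R) * elem_sym Y l.
  by rewrite mulr_gt0 ?IH // subr_gt0 (lt_le_trans _ hl) // ltr_nat.
by move/lt_le_trans/(_ (elem_sym_succ_ge Y l)); rewrite pmulr_rgt0.
Qed.

Lemma elem_symU1_le q t Y l : t \notin Y -> mass Y <= q * l.+1%:R ->
  elem_sym (t |: Y) l.+1 <= (1 + q) * elem_sym Y l.
Proof.
move=> tY hq; rewrite elem_symU1 // mulrDl mul1r [leRHS]addrC.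
apply: lerD; last by rewrite ler_piMl ?elem_sym_ge0.
rewrite -(ler_pM2l (ltr0Sn R l)) mulrA [_ * q]mulrC.
by apply: le_trans (elem_sym_succ_le Y l) _; rewrite ler_wpM2r ?elem_sym_ge0.
Qed.

Lemma elem_sym_setC_le q k T : (#|T| <= k)%N -> mass setT <= q * (k - #|T|).+1%:R ->
  elem_sym setT k <= (1 + q) ^+ #|T| * elem_sym (~: T) (k - #|T|).
Proof.
have q_ge0 j : mass setT <= q * j.+1%:R -> 0 <= q.
  by move=> hq; have := le_trans (mass_ge0 _) hq; rewrite pmulr_lge0 ?ltr0Sn.
elim/finset_ind: T => [|t T tT IH]; first by rewrite cards0 setC0 subn0 mul1r.
rewrite cardsU1 tT add1n => Tk hq; have q0 := q_ge0 _ hq.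
have hq' : mass setT <= q * (k - #|T|).+1%:R.
  by apply: le_trans hq _; rewrite ler_wpM2l // ler_nat; lia.
apply: le_trans (IH (ltnW Tk) hq') _.
rewrite exprSr -mulrA ler_wpM2l ?exprn_ge0 ?addr_ge0 //.
have -> : (k - #|T| = (k - #|T|.+1).+1)%N by lia.
have -> : ~: T = t |: ~: (t |: T).
  by apply/setP => i; rewrite !inE; case: eqP => // ->.
by apply: elem_symU1_le; [rewrite !inE eqxx | exact: le_trans (mass_le_setT _) hq].
Qed.

End ElementarySymmetric.

Lemma det_sum_outer_ge0 (R : realDomainType) m p (g : 'I_p -> 'cV[R]_m) :
  p = m -> 0 <= \det (\sum_(j < p) g j *m (g j)^T).
Proof.
move=> pm; subst p; pose B : 'M[R]_m := \matrix_(i, j) g j i 0.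
have -> : \sum_(j < m) g j *m (g j)^T = B *m B^T.
  apply/matrixP => i i'; rewrite summxE !mxE; apply: eq_bigr => j _.
  by rewrite !mxE big_ord1 !mxE.
by rewrite det_mulmx det_tr -expr2 sqr_ge0.
Qed.

Section CauchyBinet.
Variables (R : realType) (m n : nat) (a : 'I_n -> 'cV[R]_m).
Implicit Types (x : 'I_n -> R) (S T : {set 'I_n}) (f : {ffun 'I_m -> 'I_n}).

(* The coefficient of prod_i x_(f i) in the multilinear expansion of det (Mx a x) along its
   rows, row i contributing the summand x_(f i) a_(f i) a_(f i)^T. *)
Definition expansion_coef f : R :=
  (\prod_i a (f i) i 0) * \det (\matrix_(i, j) a (f i) j 0).

Definition minor_coef T : R :=
  \sum_(f : {ffun 'I_m -> 'I_n} | injectiveb f && (f @: setT == T)) expansion_coef f.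

Lemma Mx_coef x i j : Mx a x i j = \sum_l x l * (a l i 0 * a l j 0).
Proof.
rewrite /Mx summxE; apply: eq_bigr => l _.
by rewrite !mxE big_ord1 !mxE.
Qed.

Lemma det_Mx_expand x :
  \det (Mx a x) = \sum_(f : {ffun 'I_m -> 'I_n}) (\prod_i x (f i)) * expansion_coef f.
Proof.
rewrite /determinant.
under eq_bigr => s _.
  under eq_bigr => i _ do rewrite Mx_coef.
  rewrite bigA_distr_bigA mulr_sumr.
  over.
rewrite exchange_big /=; apply: eq_bigr => f _.
rewrite /expansion_coef /determinant mulr_sumr mulr_sumr; apply: eq_bigr => s _.
rewrite !mulrA [_ * (-1) ^+ _]mulrC -!mulrA; congr (_ * _).
rewrite -!big_split /=; apply: eq_bigr => i _.
by rewrite !mxE mulrA.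
Qed.

Lemma expansion_coef_eq0 f : ~~ injectiveb f -> expansion_coef f = 0.
Proof.
case/injectivePn => i [j ij fij].
by rewrite /expansion_coef (determinant_alternate ij) ?mulr0 // => c; rewrite !mxE fij.
Qed.

Lemma det_Mx_minor_coef x :
  \det (Mx a x) = \sum_(T : {set 'I_n} | #|T| == m) monom x T * minor_coef T.
Proof.
rewrite det_Mx_expand (bigID (fun f : {ffun 'I_m -> 'I_n} => injectiveb f)) /=.
rewrite [X in _ + X]big1 ?addr0 => [|f /expansion_coef_eq0 ->]; last by rewrite mulr0.
rewrite (partition_big (fun f : {ffun 'I_m -> 'I_n} => f @: setT)
  (fun T : {set 'I_n} => #|T| == m)) /=; last first.
  by move=> f /injectiveP f_inj; rewrite card_imset // cardsT card_ord.
apply: eq_bigr => T _; rewrite /minor_coef mulr_sumr.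
apply: eq_bigr => f /andP[/injectiveP f_inj /eqP <-]; congr (_ * _).
rewrite /monom big_imset /=; last by move=> i j _ _ /f_inj.
by apply: eq_bigl => i; rewrite inE.
Qed.

Lemma Mx_indicator S : Mx a (fun i => (i \in S)%:R) = MS a S.
Proof.
rewrite /Mx /MS [RHS]big_mkcond; apply: eq_bigr => i _.
by case: (i \in S); rewrite ?scale1r ?scale0r.
Qed.

Lemma monom_indicator S T : monom (fun i => (i \in S)%:R : R) T = (T \subset S)%:R.
Proof.
have [TS|/subsetPn[i iT iS]] := boolP (T \subset S).
  by apply: big1 => i /(subsetP TS) ->.
by rewrite /monom (bigD1 i) //= (negbTE iS) mul0r.
Qed.

Lemma minor_coefE T : #|T| = m -> minor_coef T = \det (MS a T).
Proof.
move=> cT; rewrite -Mx_indicator det_Mx_minor_coef (bigD1 T) ?cT //=.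
rewrite monom_indicator subxx mul1r big1 ?addr0 // => T' /andP[/eqP cT' T'T].
rewrite monom_indicator; case: (boolP (T' \subset T)) => [T'sT|]; last by rewrite mul0r.
by move: T'T; rewrite eqEcard T'sT cT cT' leqnn.
Qed.

Theorem det_Mx_cauchy_binet x :
  \det (Mx a x) = \sum_(T : {set 'I_n} | #|T| == m) monom x T * \det (MS a T).
Proof.
by rewrite det_Mx_minor_coef; apply: eq_bigr => T /eqP/minor_coefE ->.
Qed.

Lemma det_MS_ge0 T : #|T| = m -> 0 <= \det (MS a T).
Proof. by rewrite /MS big_enum_val; apply: det_sum_outer_ge0. Qed.

Lemma det_Mx_ge0 x : (forall i, 0 <= x i) -> 0 <= \det (Mx a x).
Proof.
move=> x_ge0; rewrite det_Mx_cauchy_binet; apply: sumr_ge0 => T /eqP cT.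
by rewrite mulr_ge0 ?monom_ge0 ?det_MS_ge0.
Qed.

End CauchyBinet.

Section Sampling.
Variables (R : realType) (m n k : nat) (a : 'I_n -> 'cV[R]_m) (x : 'I_n -> R).

Lemma EdetE : Edet a k x =
  (\sum_(S : {set 'I_n} | #|S| == k) monom x S * \det (MS a S)) / elem_sym x setT k.
Proof.
have -> : elem_sym x setT k = \sum_(T : {set 'I_n} | #|T| == k) monom x T.
  by apply: eq_bigl => T; rewrite subsetT.
by rewrite /Edet /prob mulr_suml; apply: eq_bigr => S _; rewrite mulrAC.
Qed.

Lemma sum_monom_det_MS : (m <= k)%N ->
  \sum_(S : {set 'I_n} | #|S| == k) monom x S * \det (MS a S) =
  \sum_(T : {set 'I_n} | #|T| == m) monom x T * \det (MS a T) * elem_sym x (~: T) (k - m).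
Proof.
move=> mk; under eq_bigr => S _ do rewrite -Mx_indicator det_Mx_cauchy_binet mulr_sumr.
rewrite exchange_big /=; apply: eq_bigr => T /eqP cT.
rewrite mulrAC -[in (k - m)%N]cT -sum_monom_supset ?cT // mulr_suml big_mkcondr /=.
apply: eq_bigr => S _; rewrite monom_indicator.
by case: (T \subset S); rewrite ?mul1r ?mul0r ?mulr0.
Qed.

Theorem det_Mx_le_Edet q : (forall i, 0 <= x i <= 1) -> \sum_i x i = k%:R ->
  (m <= k)%N -> k%:R <= q * (k - m).+1%:R ->
  \det (Mx a x) <= (1 + q) ^+ m * Edet a k x.
Proof.
move=> x01 sum_x mk hq.
have x_ge0 i : 0 <= x i by case/andP: (x01 i).
have x_le1 i : x i <= 1 by case/andP: (x01 i).
have mass_k : mass x setT = k%:R by rewrite -sum_x; apply: eq_bigl => i; rewrite inE.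
have D_gt0 : 0 < elem_sym x setT k by apply: elem_sym_gt0; rewrite ?mass_k.
rewrite EdetE sum_monom_det_MS // mulrA ler_pdivlMr // det_Mx_cauchy_binet.
rewrite mulr_suml mulr_sumr; apply: ler_sum => T /eqP cT.
rewrite mulrCA ler_wpM2l ?mulr_ge0 ?monom_ge0 ?det_MS_ge0 //.
by have := elem_sym_setC_le x_ge0 x_le1 (q := q) (T := T); rewrite cT mass_k; apply.
Qed.

End Sampling.

Section Relaxation.
Variables (R : realType) (m n k : nat) (a : 'I_n -> 'cV[R]_m).

Lemma wstar_ge0 : 0 <= wstar a k.
Proof.
rewrite /wstar; elim/big_ind: _ => // [u v u_ge0 _|S _]; last exact: powR_ge0.
by rewrite le_max u_ge0.
Qed.

Lemma indicator_feasible (S : {set 'I_n}) : #|S| = k ->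
  feasible a k (fun i => (i \in S)%:R) (mroot m (\det (MS a S))).
Proof.
move=> cS; split; first by rewrite Mx_indicator.
split; last by move=> i; case: (i \in S); rewrite ?ler01 ?lexx.
by rewrite -natr_sum -cS -sum1_card [in RHS]big_mkcond.
Qed.

Lemma uniform_feasible : (0 < n)%N -> (k <= n)%N -> feasible a k (fun=> k%:R / n%:R) 0.
Proof.
move=> n_gt0 kn; split; first exact: powR_ge0.
split; last by move=> i; rewrite divr_ge0 //= ler_pdivrMr ?ltr0n // mul1r ler_nat.
by rewrite sumr_const card_ord -[_ *+ n]mulr_natr divfK // pnatr_eq0 -lt0n.
Qed.

Lemma wstar_le_optimal x w : (0 < n)%N -> (k <= n)%N -> optimal a k x w ->
  wstar a k <= w.
Proof.
move=> n_gt0 kn [_ w_max]; apply: bigmax_le => [|S /eqP cS].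
  exact: w_max (uniform_feasible n_gt0 kn).
exact: w_max (indicator_feasible cS).
Qed.

End Relaxation.

Lemma mroot_scale_le (R : realType) m (c t u : R) : (0 < m)%N ->
  0 <= c -> 0 <= t -> c ^+ m * t <= u -> c * mroot m t <= mroot m u.
Proof.
move=> m_gt0 c_ge0 t_ge0 le_u; have cmt_ge0 : 0 <= c ^+ m * t by rewrite mulr_ge0 ?exprn_ge0.
have -> : c * mroot m t = mroot m (c ^+ m * t).
  rewrite /mroot powRM ?exprn_ge0 // -powR_mulrn // -powRrM mulfV ?powRr1 //.
  by rewrite pnatr_eq0 -lt0n.
by rewrite ge0_ler_powR ?nnegrE ?invr_ge0 ?ler0n // (le_trans cmt_ge0).
Qed.

Lemma sampling_ratio_admissible (R : realFieldType) (eps : R) (m k : nat) :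
  0 < eps -> 0 < 1 - 2 * eps -> (m <= k)%N -> (m%:R - 1) / (2 * eps) <= k%:R ->
  k%:R <= (1 - 2 * eps)^-1 * (k - m).+1%:R.
Proof.
move=> eps_gt0 d_gt0 mk; rewrite ler_pdivrMr ?mulr_gt0 // => hk.
by rewrite -[(k - m).+1%:R]natr1 natrB // [leRHS]mulrC ler_pdivlMr //; lra.
Qed.

Unset Implicit Arguments.
Set Strict Implicit.

Theorem corollary1 (R : realType) (eps : R) (m k n : nat)
  (a : 'I_n -> 'cV[R]_m) (xhat : 'I_n -> R) (what : R) :
  0 < eps < 1 ->
  (0 < m)%N -> (m <= k)%N -> (k <= n)%N ->
  (m%:R - 1) / (2 * eps) <= k%:R ->
  optimal a k xhat what ->
  mroot m (Edet a k xhat) >= (2^-1 - eps) * wstar a k.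
Proof.
move=> /andP[eps_gt0 eps_lt1] m_gt0 mk kn hk opt.
have [[what_le [sum_x x01]] _] := opt.
have x_ge0 i : 0 <= xhat i by case/andP: (x01 i).
set c := 2^-1 - eps.
have [c_le0|c_gt0] := lerP c 0.
  by apply: le_trans (powR_ge0 _ _); rewrite mulr_le0_ge0 ?wstar_ge0.
have d_gt0 : 0 < 1 - 2 * eps by rewrite /c in c_gt0; lra.
set q := (1 - 2 * eps)^-1.
have q_gt0 : 0 < q by rewrite invr_gt0.
have hq := sampling_ratio_admissible eps_gt0 d_gt0 mk hk.
have cq_le1 : (1 + q) * c <= 1.
  have -> : (1 + q) * c = 1 - eps by rewrite /q /c; field; rewrite gt_eqF.
  lra.
have Edet_ge : c ^+ m * \det (Mx a xhat) <= Edet a k xhat.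
  rewrite -(ler_pM2l (exprn_gt0 m (ltr_wpDr (ltW q_gt0) ltr01))).
  apply: le_trans (det_Mx_le_Edet a x01 sum_x mk hq); rewrite mulrA -exprMn.
  apply: ler_piMl; first exact: det_Mx_ge0.
  by apply: exprn_ile1 cq_le1; apply: mulr_ge0; [lra | exact: ltW].
apply: le_trans (mroot_scale_le m_gt0 (ltW c_gt0) (det_Mx_ge0 a x_ge0) Edet_ge).
rewrite ler_wpM2l ?(ltW c_gt0) // (le_trans _ what_le) //.
exact: wstar_le_optimal (leq_trans m_gt0 (leq_trans mk kn)) kn opt.
Qed.
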